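(* Let $A$ be a rational matrix with $m$ rows and $n$ columns, and let $b$ and $c$ be rational vectors. Consider the following procedure $\mathrm{maximize}(A,b,c)$. If $b$ has length $m$ and $c$ has length $n$, it forms the following finite list of non-strict linear constraints over rational variables $z_0,\dots,z_{n+m-1}$, where one writes $x=(z_0,\dots,z_{n-1})$ and $y=(z_n,\dots,z_{n+m-1})$: (i) $c\cdot x \ge b\cdot y$; (ii) $(Ax)_i \le b_i$ for each $i<m$; (iii) $(A^{T}y)_j = c_j$ for each $j<n$; (iv) $y_i\ge 0$ for each $i<m$. It then calls a simplex decision procedure on this list. That procedure either returns $\mathrm{Unsat}$ together with a list of constraint indices, or returns $\mathrm{Sat}$ together with an assignment of rational values to the variables that satisfies every constraint in the list. In the first case $\mathrm{maximize}$ returns $\mathrm{Some}(\mathrm{Unsat}(\ldots))$; in the second case it returns $\mathrm{Some}(\mathrm{Sat}(x,y))$, where $x\in\mathbb{Q}^n$ consists of the values of $z_0,\dots,z_{n-1}$ and $y\in\mathbb{Q}^m$ consists of the values of $z_n,\dots,z_{n+m-1}$. If the length conditions on $b$ and $c$ fail, it returns $\mathrm{None}$. Claim: if $\mathrm{maximize}(A,b,c)=\mathrm{Some}(\mathrm{Sat}(x,y))$, then $x$ is an optimal solution of the linear program ''maximize $c\cdot x$ subject to $Ax\le b$''. That is, $Ax\le b$ holds componentwise, and $c\cdot v\le c\cdot x$ for every $v\in\mathbb{Q}^n$ with $Av\le b$ componentwise.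
   Context: $\cdot$ denotes the dot product of vectors, and $\le$ between vectors is the componentwise order. The simplex decision procedure is sound: whenever it returns $\mathrm{Sat}$, the returned assignment satisfies all the constraints it was given. The set of optimal solutions of the primal program (''max_lp $A$ $b$ $c$'' in the paper) is $\{x : Ax\le b \text{ and } \forall v\,(Av\le b \Rightarrow v\cdot c\le x\cdot c)\}$. *)

From HB Require Import structures.
From mathcomp Require Import all_boot all_order all_algebra.
Set Implicit Arguments. Unset Strict Implicit. Unset Printing Implicit Defensive.
Import Order.TTheory GRing.Theory Num.Theory.
Local Open Scope ring_scope.

(* A linear polynomial: a list of (variable index, coefficient) pairs,
   denoting  sum_k coeff_k * z_(index_k). *)
Definition linpoly := seq (nat * rat).

Definition eval_lp (p : linpoly) (v : nat -> rat) : rat :=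
  \sum_(t <- p) t.2 * v t.1.

Inductive constraint :=
| LEQ of linpoly & rat
| GEQ of linpoly & rat
| EQ  of linpoly & rat.

Definition satisfies (v : nat -> rat) (k : constraint) : Prop :=
  match k with
  | LEQ p r => eval_lp p v <= r
  | GEQ p r => r <= eval_lp p v
  | EQ p r => eval_lp p v = r
  end.

Inductive simplex_result :=
| Unsat of seq nat
| Sat of (nat -> rat).

(* List membership (constraint has no eqType). *)
Fixpoint inlist (k : constraint) (cs : seq constraint) : Prop :=
  match cs with nil => False | cons k' cs' => k' = k \/ inlist k cs' end.

Definition simplex_sound (simplex : seq constraint -> simplex_result) : Prop :=
  forall cs v, simplex cs = Sat v -> forall k, inlist k cs -> satisfies v k.

Inductive max_result (m n : nat) :=
| MUnsat of seq nat
| MSat of 'cV[rat]_n & 'cV[rat]_m.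
Arguments MUnsat {m n}.
Arguments MSat {m n}.

(* Vector from a list (used when the length is right). *)
Definition vec_of (k : nat) (s : seq rat) : 'cV[rat]_k := \col_(i < k) nth 0 s i.

(* Constraint list; x_j = z_j (j < n),  y_i = z_(n+i) (i < m). *)
Definition lp_constraints (m n : nat) (A : 'M[rat]_(m, n)) (b c : seq rat)
  : seq constraint :=
  (* (i) c.x >= b.y, written as c.x - b.y >= 0 *)
  GEQ ([seq (nat_of_ord j, nth 0 c j) | j <- enum 'I_n]
       ++ [seq ((n + nat_of_ord i)%N, - nth 0 b i) | i <- enum 'I_m]) 0
  :: [seq LEQ [seq (nat_of_ord j, A i j) | j <- enum 'I_n] (nth 0 b i)
       | i <- enum 'I_m]
  ++ [seq EQ [seq ((n + nat_of_ord i)%N, A i j) | i <- enum 'I_m] (nth 0 c j)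
       | j <- enum 'I_n]
  ++ [seq GEQ [:: ((n + nat_of_ord i)%N, 1)] 0 | i <- enum 'I_m].

Definition maximize (simplex : seq constraint -> simplex_result)
  (m n : nat) (A : 'M[rat]_(m, n)) (b c : seq rat) : option (max_result m n) :=
  if (size b == m) && (size c == n) then
    match simplex (lp_constraints A b c) with
    | Unsat ks => Some (MUnsat ks)
    | Sat v => Some (MSat (\col_(j < n) v (nat_of_ord j))
                         (\col_(i < m) v (n + nat_of_ord i)%N))
    end
  else None.

Definition dotv (k : nat) (u w : 'cV[rat]_k) : rat := \sum_(i < k) u i 0 * w i 0.

Definition lev (k : nat) (u w : 'cV[rat]_k) : Prop := forall i, u i 0 <= w i 0.

Definition max_lp (m n : nat) (A : 'M[rat]_(m, n)) (b : 'cV[rat]_m) (c : 'cV[rat]_n)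
  (x : 'cV[rat]_n) : Prop :=
  lev (A *m x) b /\ forall v : 'cV[rat]_n, lev (A *m v) b -> dotv v c <= dotv x c.

(* Weak duality: if y >= 0 and A^T y = c, then every v with A v <= b has
   c.v <= b.y.  The constraints handed to the simplex procedure say exactly that
   x is primal feasible, that y is such a dual certificate, and that c.x >= b.y,
   so c.v <= b.y <= c.x for every feasible v. *)
From mathcomp Require Import all_boot all_order all_algebra.
Set Implicit Arguments.
Unset Strict Implicit.
Unset Printing Implicit Defensive.
Import Order.TTheory GRing.Theory Num.Theory.
Local Open Scope ring_scope.

Lemma weak_duality (R : numDomainType) m n (A : 'M[R]_(m, n))
    (b y : 'cV[R]_m) (c v : 'cV[R]_n) :
  A^T *m y = c -> (forall i, 0 <= y i 0) -> (forall i, (A *m v) i 0 <= b i 0) ->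
  (v^T *m c) 0 0 <= (b^T *m y) 0 0.
Proof.
move=> <- y_ge0 Av_le_b; rewrite mulmxA -trmx_mul [X in X <= _]mxE [X in _ <= X]mxE.
by apply: ler_sum => i _; rewrite ![_^T _ _]mxE; apply: ler_wpM2r.
Qed.

Lemma dotvE k (u w : 'cV[rat]_k) : dotv u w = (u^T *m w) 0 0.
Proof. by rewrite mxE; apply: eq_bigr => i _; rewrite mxE. Qed.

Lemma max_lp_of_dual_certificate m n (A : 'M[rat]_(m, n))
    (b y : 'cV[rat]_m) (c x : 'cV[rat]_n) :
  lev (A *m x) b -> A^T *m y = c -> (forall i, 0 <= y i 0) ->
  dotv b y <= dotv x c -> max_lp A b c x.
Proof.
move=> Ax_le_b dual_eq y_ge0 gap; split=> // v Av_le_b.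
rewrite !dotvE in gap *; apply: le_trans _ gap.
exact: weak_duality dual_eq y_ge0 Av_le_b.
Qed.

Lemma inlist_catl k s1 s2 : inlist k s1 -> inlist k (s1 ++ s2).
Proof. by elim: s1 => //= a s IHs [-> | /IHs]; [left | right]. Qed.

Lemma inlist_catr k s1 s2 : inlist k s2 -> inlist k (s1 ++ s2).
Proof. by elim: s1 => //= a s IHs /IHs; right. Qed.

Lemma inlist_map_enum (T : finType) (f : T -> constraint) i :
  inlist (f i) [seq f j | j <- enum T].
Proof.
have : i \in enum T by rewrite mem_enum.
by elim: (enum T) => //= a s IHs; rewrite inE => /predU1P [-> | /IHs]; [left | right].
Qed.

Lemma eval_lp_cat (p q : linpoly) v : eval_lp (p ++ q) v = eval_lp p v + eval_lp q v.
Proof. exact: big_cat. Qed.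

Lemma eval_lp_map_enum k (f : 'I_k -> nat * rat) v :
  eval_lp [seq f j | j <- enum 'I_k] v = \sum_(j < k) (f j).2 * v (f j).1.
Proof. by rewrite /eval_lp big_map big_enum. Qed.

Definition primal_part n (v : nat -> rat) : 'cV[rat]_n := \col_(j < n) v j.

Definition dual_part n m (v : nat -> rat) : 'cV[rat]_m := \col_(i < m) v (n + i)%N.

Section SatisfyingAssignment.

Variables (m n : nat) (A : 'M[rat]_(m, n)) (b c : seq rat) (v : nat -> rat).
Hypothesis v_sat : forall k, inlist k (lp_constraints A b c) -> satisfies v k.

Lemma primal_part_feasible : lev (A *m primal_part n v) (vec_of m b).
Proof.
move=> i; have := v_sat (or_intror (inlist_catl _ (inlist_map_enum
  (fun i => LEQ [seq (nat_of_ord j, A i j) | j <- enum 'I_n] (nth 0 b i)) i))).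
rewrite /= eval_lp_map_enum !mxE => Av_le_b.
by under eq_bigr do rewrite mxE.
Qed.

Lemma dual_part_feasible : A^T *m dual_part n m v = vec_of n c.
Proof.
apply/matrixP => j k; rewrite ord1 !mxE.
have := v_sat (or_intror (inlist_catr _ (inlist_catl _ (inlist_map_enum
  (fun j => EQ [seq ((n + nat_of_ord i)%N, A i j) | i <- enum 'I_m] (nth 0 c j)) j)))).
by rewrite /= eval_lp_map_enum => <-; apply: eq_bigr => i _; rewrite !mxE.
Qed.

Lemma dual_part_ge0 i : 0 <= dual_part n m v i 0.
Proof.
have := v_sat (or_intror (inlist_catr _ (inlist_catr _ (inlist_map_enum
  (fun i : 'I_m => GEQ [:: ((n + nat_of_ord i)%N, 1)] 0) i)))).
by rewrite /= /eval_lp big_seq1 mul1r mxE.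
Qed.

Lemma dual_objective_le_primal :
  dotv (vec_of m b) (dual_part n m v) <= dotv (primal_part n v) (vec_of n c).
Proof.
have := v_sat (or_introl erefl); rewrite /= eval_lp_cat !eval_lp_map_enum /=.
under [X in _ + X]eq_bigr do rewrite mulNr.
rewrite sumrN subr_ge0 /dotv => gap.
have -> : \sum_i vec_of m b i 0 * dual_part n m v i 0
          = \sum_(i < m) nth 0 b i * v (n + i)%N.
  by apply: eq_bigr => i _; rewrite !mxE.
have -> : \sum_j primal_part n v j 0 * vec_of n c j 0
          = \sum_(j < n) nth 0 c j * v j.
  by apply: eq_bigr => j _; rewrite !mxE mulrC.
exact: gap.
Qed.

End SatisfyingAssignment.

Theorem mainTheorem2
  (simplex : seq constraint -> simplex_result) (Hsound : simplex_sound simplex)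
  (m n : nat) (A : 'M[rat]_(m, n)) (b c : seq rat)
  (x : 'cV[rat]_n) (y : 'cV[rat]_m) :
  maximize simplex A b c = Some (MSat x y) ->
  max_lp A (vec_of m b) (vec_of n c) x.
Proof.
rewrite /maximize; case: ifP => // _.
case simplex_Sat: (simplex _) => [// | v] [<- _].
have v_sat := Hsound _ _ simplex_Sat.
apply: (max_lp_of_dual_certificate (y := dual_part n m v)).
- exact: primal_part_feasible v_sat.
- exact: dual_part_feasible v_sat.
- exact: dual_part_ge0 v_sat.
- exact: dual_objective_le_primal v_sat.
Qed.
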